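(* Let $p\geq 5$ be a prime, let $G=\mathbb{S}_{2p}$ or $\mathbb{A}_{2p}$, and let $\mathcal{C}$ be a conjugacy class of non-trivial $p$-elements of $G$. Then $K_{\mathcal{C}}$ is irreducible.
   Context: For a finite group $G$ and a subset $\mathcal{C}\subseteq G\setminus\{1\}$ closed under conjugation, the Killing form $K_{\mathcal{C}}$ is the bilinear form on the complex vector space with basis $\mathcal{C}$ given on basis elements by $K_{\mathcal{C}}(a,b)=|C_G(ab)\cap\mathcal{C}|$. $K_{\mathcal{C}}$ is irreducible if the graph with vertex set $\mathcal{C}$, in which distinct $a,b$ are adjacent iff $C_G(ab)\cap\mathcal{C}\neq\emptyset$, is connected, and reducible otherwise. *)

From mathcomp Require Import all_boot all_fingroup all_solvable.
Set Implicit Arguments. Unset Strict Implicit. Unset Printing Implicit Defensive.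
Local Open Scope group_scope.

(* Commuting graph of the Killing form K_C: vertices are the elements of C,
   distinct a, b adjacent iff C_G(ab) meets C. *)
Definition killing_rel (gT : finGroupType) (G C : {set gT}) : rel gT :=
  fun a b => [&& a \in C, b \in C, a != b & 'C_G[a * b] :&: C != set0].

(* K_C is irreducible iff that graph is connected. *)
Definition killing_irreducible (gT : finGroupType) (G C : {set gT}) : Prop :=
  forall a b, a \in C -> b \in C -> connect (killing_rel G C) a b.

From mathcomp Require Import all_boot all_fingroup all_solvable zify.
Set Implicit Arguments. Unset Strict Implicit. Unset Printing Implicit Defensive.
Local Open Scope group_scope.

(* For x in a class C = x ^: N, the g in N such that x is connected to x ^ g form a
   subgroup containing the centraliser of x, so the Killing graph on C is connected as
   soon as x is connected to x ^ s for every s in a generating set of N.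
   A non-trivial p-element of S_2p is conjugate to c1 = (0 ... p-1) or to c1 c2 with
   c2 = (p ... 2p-1); as both commute with an odd permutation, their A_2p-classes are
   their S_2p-classes.  S_2p is generated by c1, c2 and t = (0 p), and c1, c2 centralise
   c1 c2.  For x = c1 c2, the product x x^t is again conjugate to x, so it lies in the
   class and centralises itself: x and x^t are adjacent.  For x = c1, with n : i |-> -i mod p, x is adjacent to x^n = x^-1 (their
   product is 1) and to x^(n t) (their product is a 3-cycle on {0, p-1, p}, centralised
   by a conjugate of c1 of disjoint support); t = n^-1 (n t) finishes the argument. *)

Lemma killing_relJ (gT : finGroupType) (G C : {set gT}) k a b :
  killing_rel G C a b -> killing_rel (G :^ k) (C :^ k) (a ^ k) (b ^ k).
Proof.
case/and4P=> aC bC nab /set0Pn[c /setIP[/setIP[cG cab] cC]].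
apply/and4P; split; rewrite ?memJ_conjg ?(inj_eq (@conjg_inj _ k)) //.
apply/set0Pn; exists (c ^ k).
by rewrite -conjMg cent1J -!conjIg memJ_conjg; apply/setIP; split; first exact/setIP.
Qed.

Lemma killing_rel_witness (gT : finGroupType) (G C : {set gT}) a b w :
  a \in C -> b \in C -> a != b -> w \in G -> w \in C -> commute w (a * b) ->
  killing_rel G C a b.
Proof.
move=> aC bC nab wG wC cw; apply/and4P; split=> //.
by apply/set0Pn; exists w; rewrite inE wC andbT inE wG; apply/cent1P.
Qed.

Lemma conjg_fix_commute (gT : finGroupType) (x y : gT) : commute x y -> x ^ y = x.
Proof. by move=> cxy; rewrite /conjg cxy mulKg. Qed.

Section KillingClass.

Variables (gT : finGroupType) (G N : {group gT}) (x : gT).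
Hypothesis nGN : N \subset 'N(G).
Local Notation R := (killing_rel G (x ^: N)).

Lemma connect_killing_relJ k a b : k \in N -> connect R a b -> connect R (a ^ k) (b ^ k).
Proof.
move=> kN /connectP[s]; elim: s a => [|c s IHs] a /=; first by move=> _ ->.
case/andP=> Rac /IHs/[apply] Rcb; apply: connect_trans Rcb.
apply: connect1; have := killing_relJ k Rac.
by rewrite (normP (subsetP nGN k kN)) classGidr.
Qed.

Lemma killing_irreducible_class_gen (S : {set gT}) :
  <<S>> = N -> {in S, forall s, connect R x (x ^ s)} ->
  killing_irreducible G (x ^: N).
Proof.
move=> genS connS.
have SN : S \subset N by rewrite -genS subset_gen.
pose H := [set g in N | connect R x (x ^ g)].
have gH : group_set H.
  apply/group_setP; split=> [|g h]; first by rewrite !inE group1 conjg1 connect0.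
  rewrite !inE => /andP[gN xg] /andP[hN xh]; rewrite groupM //= conjgM.
  exact: connect_trans xh (connect_killing_relJ hN xg).
have NH : N \subset H.
  rewrite -genS (gen_subG S (Group gH)).
  by apply/subsetP=> s sS; rewrite inE (subsetP SN) ?connS.
have connN g : g \in N -> connect R x (x ^ g) by move/(subsetP NH); rewrite inE => /andP[].
move=> _ _ /imsetP[g gN ->] /imsetP[h hN ->].
apply: connect_trans (connN h hN).
by have := connect_killing_relJ gN (connN _ (groupVr gN)); rewrite conjgKV.
Qed.

End KillingClass.

Section Permutations.

Variable T : finType.
Implicit Types (c x u k : {perm T}) (a b : T).

Lemma Sym_Alt_norm (G : {group {perm T}}) :
  G :=: 'Sym_T \/ G :=: 'Alt_T -> [set: {perm T}] \subset 'N(G).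
Proof. by case=> ->; [rewrite normG | exact: Alt_norm]. Qed.

Lemma class_Alt_Sym x u : odd_perm u -> commute x u -> x ^: 'Alt_T = x ^: 'Sym_T.
Proof.
move=> ou cxu; apply/eqP; rewrite eqEsubset imsetS ?subsetT //=.
apply/subsetP=> _ /imsetP[g _ ->]; have [og | eg] := boolP (odd_perm g).
  rewrite -{1}(conjg_fix_commute cxu) -conjgM memJ_class //.
  by rewrite Alt_even odd_permM ou og.
by apply: memJ_class; rewrite Alt_even.
Qed.

Lemma killing_irreducible_Sym_Alt (G : {group {perm T}}) c u k :
  G :=: 'Sym_T \/ G :=: 'Alt_T -> odd_perm u -> commute c u ->
  killing_irreducible G (c ^: [set: {perm T}]) -> killing_irreducible G ((c ^ k) ^: G).
Proof.
move=> hG ou ccu; rewrite -(classGidl c (in_setT k)).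
suff -> : (c ^ k) ^: G = (c ^ k) ^: [set: {perm T}] by [].
case: hG => -> //; apply: (class_Alt_Sym (u := u ^ k)); first by rewrite odd_permJ.
by rewrite /commute -!conjMg ccu.
Qed.

Lemma card_porbit_dvdn x a : #|porbit x a| %| #[x].
Proof. by rewrite porbitE card_orbit dvdn_indexg. Qed.

Lemma expg_porbit_dvdn x a m : #|porbit x a| %| m -> (x ^+ m) a = a.
Proof. by case/dvdnP=> n ->; rewrite mulnC expgM permX_fix // permX iter_porbit. Qed.

Lemma pelt_expg_prime p x : prime p -> #|T| < p ^ 2 -> p.-elt x -> x ^+ p = 1.
Proof.
move=> p_pr card_lt /p_natP[e ox]; apply/permP=> a; rewrite perm1 expg_porbit_dvdn //.
have /(dvdn_pfactor _ _ p_pr)[f _ orb_pf] : #|porbit x a| %| p ^ e.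
  by rewrite -ox card_porbit_dvdn.
have : p ^ f < p ^ 2 by rewrite -orb_pf (leq_ltn_trans (max_card _)).
by rewrite ltn_exp2l ?prime_gt1 // orb_pf; case: f {orb_pf} => [|[|]].
Qed.

Lemma card_porbit_prime p x a : prime p -> x ^+ p = 1 -> x a != a -> #|porbit x a| = p.
Proof.
move=> p_pr xp xa.
have /(dvdn_trans (card_porbit_dvdn x a)) : #[x] %| p by rewrite order_dvdn xp.
case/primeP: p_pr => _ /[apply] /orP[/eqP orb1 | /eqP //].
by case/eqP: xa; rewrite -[x a]/(iter 1 x a) -orb1 iter_porbit.
Qed.

Lemma porbit_expg_inj x a i j :
  i < #|porbit x a| -> j < #|porbit x a| -> (x ^+ i) a = (x ^+ j) a -> i = j.
Proof.
move=> lt_i lt_j; rewrite !permX -(nth_traject _ lt_i) -(nth_traject _ lt_j) => e.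
by apply/eqP; rewrite -(nth_uniq a _ _ (uniq_traject_porbit x a)) ?size_traject ?e.
Qed.

Lemma porbit_expg_neq x a b i j : b \notin porbit x a -> (x ^+ i) a != (x ^+ j) b.
Proof.
move=> bO; apply/eqP => e; case/negP: bO.
by rewrite -eq_porbit_mem -(porbit_perm x j b) -e porbit_perm.
Qed.

Lemma perm_on_fix (S : {set T}) x : {in ~: S, forall i, x i = i} -> perm_on S x.
Proof.
by move=> fixS; apply/subsetP=> i; rewrite inE; apply: contraR => iS; rewrite fixS ?inE.
Qed.

Lemma perm_conj_intertwine c x (k : T -> T) (k_inj : injective k) :
  (forall i, k (c i) = x (k i)) -> x = c ^ perm k_inj.
Proof.
move=> ck; suff e : perm k_inj * x = c * perm k_inj by rewrite conjgE -e mulKg.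
by apply/permP => i; rewrite !permM !permE ck.
Qed.

Definition join_blocks n (u v : nat -> T) (m : 'I_(n.*2)) : T :=
  if m < n then u m else v (m - n).

Lemma join_blocks_inj n (u v : nat -> T) :
  (forall i j, i < n -> j < n -> u i = u j -> i = j) ->
  (forall i j, i < n -> j < n -> v i = v j -> i = j) ->
  (forall i j, i < n -> j < n -> u i != v j) ->
  injective (join_blocks (n := n) u v).
Proof.
move=> u_inj v_inj uv m1 m2; rewrite /join_blocks.
have := ltn_ord m1; have := ltn_ord m2.
case: ifP => lt1; case: ifP => lt2 lt_m2 lt_m1 e; apply/val_inj => /=.
- exact: u_inj e.
- by case/eqP: (uv m1 (m2 - n) lt1 ltac:(lia)).
- by case/eqP: (uv m2 (m1 - n) lt2 ltac:(lia)).
- by have := v_inj (m1 - n) (m2 - n) ltac:(lia) ltac:(lia) e; lia.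
Qed.

End Permutations.

(* The junk value 1 is returned when f does not permute [0, n). *)
Definition perm_of_nat n (f : nat -> nat) : {perm 'I_n} :=
  insubd (1 : {perm 'I_n}) [ffun i : 'I_n => insubd i (f i) : 'I_n].

Lemma perm_of_natE n (f : nat -> nat) (i : 'I_n) :
  (forall m, m < n -> f m < n) ->
  (forall m m', m < n -> m' < n -> f m = f m' -> m = m') ->
  val (perm_of_nat n f i) = f i.
Proof.
move=> f_lt f_inj.
have val_f (j : 'I_n) : val (insubd j (f j)) = f j by rewrite val_insubd f_lt.
have /injectiveP finj : injective [ffun j : 'I_n => insubd j (f j)].
  move=> j k /[!ffunE] /(congr1 val); rewrite !val_f => /f_inj e.
  exact/val_inj/e.
by rewrite -pvalE /perm_of_nat val_insubd finj ffunE val_f.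
Qed.

Lemma val_tperm n (a b c : 'I_n) :
  val (tperm a b c) =
    if val c == val a then val b else if val c == val b then val a else val c.
Proof.
case: tpermP => [->|->|/eqP nca /eqP ncb]; rewrite ?eqxx //.
- by case: eqP => // /val_inj ->.
- by rewrite val_eqE (negbTE nca) val_eqE (negbTE ncb).
Qed.

Ltac case_lia :=
  repeat match goal with
  | |- context [if ?c then _ else _] =>
      lazymatch c with context [if _ then _ else _] => fail | _ =>
      let E := fresh "E" in case E: c; try (move=> *; exfalso; lia) end
  end; move=> *; lia.

Definition rotn lo hi m := if lo <= m < hi then (if m.+1 == hi then lo else m.+1) else m.
Definition negn p m := if 0 < m < p then p - m else m.
Definition interleaven p m := if m < p then m.*2 else (m - p).*2.+1.
Definition swapn p j m := if m < j then m + p else if p <= m < p + j then m - p else m.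

Section CanonicalForms.

(* Writing p as q.+1 makes 'I_(p.*2) a type of the form 'I_n.+1, so that inord applies. *)
Variable q : nat.
Local Notation p := q.+1.
Local Notation pt m := (inord m : 'I_(p.*2)).

Definition cyc1 := perm_of_nat p.*2 (rotn 0 p).
Definition cyc2 := perm_of_nat p.*2 (rotn p p.*2).
Definition neg1 := perm_of_nat p.*2 (negn p).
Definition interleave := perm_of_nat p.*2 (interleaven p).
Definition swap_halves j := perm_of_nat p.*2 (swapn p j).

Local Notation c1 := cyc1.
Local Notation c2 := cyc2.
Local Notation t := (tperm (pt 0) (pt p)).

Lemma cyc1E i : val (c1 i) = rotn 0 p i.
Proof. by apply: perm_of_natE => [m|m m']; rewrite /rotn; case_lia. Qed.

Lemma cyc2E i : val (c2 i) = rotn p p.*2 i.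
Proof. by apply: perm_of_natE => [m|m m']; rewrite /rotn; case_lia. Qed.

Lemma neg1E i : val (neg1 i) = negn p i.
Proof. by apply: perm_of_natE => [m|m m']; rewrite /negn; case_lia. Qed.

Lemma interleaveE i : val (interleave i) = interleaven p i.
Proof. by apply: perm_of_natE => [m|m m']; rewrite /interleaven; case_lia. Qed.

Lemma swap_halvesE j i : j <= p -> val (swap_halves j i) = swapn p j i.
Proof. by move=> le_jp; apply: perm_of_natE => [m|m m']; rewrite /swapn; case_lia. Qed.

Lemma ptE m : m < p.*2 -> val (pt m) = m.
Proof. exact: inordK. Qed.

Ltac perm_vals := rewrite ?permM ?perm1 /=;
  repeat progress rewrite ?cyc1E ?cyc2E ?neg1E ?interleaveE ?swap_halvesE ?val_tperm /=;
  rewrite /inord ?val_insubd /rotn /negn /interleaven /swapn.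

Ltac perm_lia := apply/permP => i; apply: val_inj; have := ltn_ord i; perm_vals; case_lia.

Lemma commute_cyc12 : commute c1 c2.
Proof. perm_lia. Qed.

Lemma commute_cyc1_tperm : commute c1 (tperm (pt p) (pt p.+1)).
Proof. perm_lia. Qed.

Lemma commute_cyc12_swap_halves : commute (c1 * c2) (swap_halves p).
Proof. perm_lia. Qed.

Lemma swap_halves0 : swap_halves 0 = 1.
Proof. perm_lia. Qed.

Lemma swap_halvesS j :
  j < p -> swap_halves j.+1 = swap_halves j * tperm (pt j) (pt (j + p)).
Proof. move=> lt_jp; perm_lia. Qed.

Lemma odd_swap_halves j : j <= p -> odd_perm (swap_halves j) = odd j.
Proof.
elim: j => [|j IHj] le_jp; first by rewrite swap_halves0 odd_perm1.
rewrite swap_halvesS // odd_permM IHj ?odd_tperm 1?ltnW //.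
by rewrite -val_eqE /= !ptE ?eqn_addr; try lia; rewrite addbT.
Qed.

Lemma neg1K : neg1 * neg1 = 1.
Proof. perm_lia. Qed.

Lemma neg1V : neg1^-1 = neg1.
Proof. by apply: (mulgI neg1); rewrite mulgV neg1K. Qed.

Lemma cyc1_mul_conj_neg1 : c1 * c1 ^ neg1 = 1.
Proof. rewrite conjgE neg1V; perm_lia. Qed.

Lemma cyc1X m : m < p -> (c1 ^+ m) (pt 0) = pt m.
Proof.
elim: m => [|m IHm] lt_mp; first by rewrite expg0 perm1.
by rewrite expgSr permM IHm 1?ltnW //; apply: val_inj; perm_vals; case_lia.
Qed.

Lemma cyc2X m : m < p -> (c2 ^+ m) (pt p) = pt (p + m).
Proof.
elim: m => [|m IHm] lt_mp; first by rewrite expg0 perm1 addn0.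
by rewrite expgSr permM IHm 1?ltnW //; apply: val_inj; perm_vals; case_lia.
Qed.

Lemma cyc1X_fix m : (c1 ^+ m) (pt p) = pt p.
Proof. by apply: permX_fix; apply: val_inj; perm_vals; case_lia. Qed.

Lemma cyc2X_fix m : (c2 ^+ m) (pt 0) = pt 0.
Proof. by apply: permX_fix; apply: val_inj; perm_vals; case_lia. Qed.

Lemma gen_cyc12_tperm : <<[set c1; c2; t]>> = [set: {perm 'I_(p.*2)}].
Proof.
apply/eqP; rewrite eqEsubset subsetT -(gen_tperm (pt 0)) gen_subG.
set H := (X in _ \subset X).
have inH s : s \in [set c1; c2; t] -> s \in H by apply: mem_gen.
have [c1H c2H tH] : [/\ c1 \in H, c2 \in H & t \in H].
  by split; apply: inH; rewrite !inE eqxx ?orbT.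
apply/subsetP=> _ /imsetP[y _ ->]; rewrite -[y]inord_val.
have [lt_yp | le_py] := ltnP y p.
  have [-> | ny0] := eqVneq (pt y) (pt 0); first by rewrite tperm1 group1.
  have ty : t ^ (c1 ^+ y) = tperm (pt y) (pt p) by rewrite tpermJ cyc1X ?cyc1X_fix.
  have -> : tperm (pt 0) (pt y) = t ^ tperm (pt y) (pt p).
    rewrite tpermJ tpermR tpermD // -val_eqE /= !ptE; lia.
  by rewrite groupJ // -ty groupJ ?groupX.
have -> : tperm (pt 0) (pt y) = t ^ (c2 ^+ (y - p)).
  by rewrite tpermJ cyc2X_fix cyc2X ?subnKC //; have := ltn_ord y; lia.
by rewrite groupJ ?groupX.
Qed.

Lemma rotn_lt m : m < p -> rotn 0 p m < p.
Proof. by rewrite /rotn; case_lia. Qed.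

Lemma rotn_ge m : p <= m -> rotn 0 p m = m.
Proof. by rewrite /rotn; case_lia. Qed.

Lemma val_cyc12 i :
  val ((c1 * c2) i) = if i < p then rotn 0 p i else p + rotn 0 p (i - p).
Proof. by have := ltn_ord i; perm_vals; case_lia. Qed.

Lemma expg_rotn (T : finType) (x : {perm T}) a m :
  x ^+ p = 1 -> m < p -> (x ^+ rotn 0 p m) a = x ((x ^+ m) a).
Proof.
move=> xp lt_mp; rewrite -permM -expgSr /rotn leq0n lt_mp.
by case: (eqVneq m.+1 p) => [-> | _]; rewrite ?xp ?expg0.
Qed.

(* The conjugating permutation lists the orbit of a moved point a in [0, p), and in
   [p, 2p) either the orbit of a second moved point or the p points outside the orbit of a. *)
Lemma pelt_conj_cyc (x : {perm 'I_(p.*2)}) :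
  prime p -> x ^+ p = 1 -> x != 1 -> exists k, x = c1 ^ k \/ x = (c1 * c2) ^ k.
Proof.
move=> p_pr xp ntx.
have [a xa] : exists a, x a != a.
  apply/existsP; apply: contraNT ntx => /existsPn fixx.
  by apply/eqP/permP => a; rewrite perm1; apply/eqP/negbNE/fixx.
have orbit_inj y :
    x y != y -> forall i j, i < p -> j < p -> (x ^+ i) y = (x ^+ j) y -> i = j.
  move=> xy i j lt_i lt_j.
  by apply: porbit_expg_inj; rewrite (card_porbit_prime p_pr xp xy).
pose O := porbit x a; pose u m := (x ^+ m) a.
have [b /andP[bO xb] | fixO] := pickP [pred b | (b \notin O) && (x b != b)].
  pose v m := (x ^+ m) b.
  have k_inj : injective (join_blocks (n := p) u v).
    apply: join_blocks_inj (orbit_inj a xa) (orbit_inj b xb) _ => i j _ _.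
    exact: porbit_expg_neq.
  exists (perm k_inj); right; apply: perm_conj_intertwine => i.
  rewrite /join_blocks val_cyc12; have [lt_ip | le_pi] := ltnP i p.
    by rewrite rotn_lt // /u expg_rotn.
  by rewrite ltnNge leq_addr addKn /v expg_rotn //; have := ltn_ord i; lia.
pose e := enum (~: O); pose v m := nth a e m.
have size_e : size e = p.
  by have := cardsC O; rewrite -cardE card_ord (card_porbit_prime p_pr xp xa); lia.
have vO m : m < p -> v m \notin O.
  by move=> lt_mp; rewrite -in_setC -mem_enum mem_nth ?size_e.
have k_inj : injective (join_blocks (n := p) u v).
  apply: join_blocks_inj (orbit_inj a xa) _ _ => [i j lt_i lt_j /eqP|i j _ lt_j].
    by rewrite nth_uniq ?size_e ?enum_uniq // => /eqP.
  by apply: contraNneq (vO j lt_j) => <-; apply: mem_porbit.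
exists (perm k_inj); left; apply: perm_conj_intertwine => i.
rewrite /join_blocks cyc1E; have [lt_ip | le_pi] := ltnP i p.
  by rewrite rotn_lt // /u expg_rotn.
rewrite rotn_ge // ltnNge le_pi.
have := fixO (v (i - p)); rewrite /= vO => [/negbFE/eqP -> //|].
by have := ltn_ord i; lia.
Qed.

Hypothesis p_gt2 : 2 < p.

Lemma interleave_cyc12 :
  interleave * ((c1 * c2) * (c1 * c2) ^ t) = (c1 * c2) * interleave.
Proof. rewrite conjgE tpermV; perm_lia. Qed.

Lemma cyc12_mul_conj_tperm : (c1 * c2) * (c1 * c2) ^ t = (c1 * c2) ^ interleave.
Proof. by apply: (mulgI interleave); rewrite interleave_cyc12 conjgE !mulgA mulgV mul1g. Qed.

Lemma cyc12_neq_conj_tperm : c1 * c2 != (c1 * c2) ^ t.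
Proof.
apply/eqP => /(congr1 (fun s : {perm _} => val (s (pt p)))).
by rewrite conjgE tpermV; perm_vals; case_lia.
Qed.

Lemma cyc1_neq_conj_neg1 : c1 != c1 ^ neg1.
Proof.
apply/eqP => e; have := cyc1_mul_conj_neg1; rewrite -e.
move/(congr1 (fun s : {perm _} => val (s (pt 0)))).
by rewrite perm1; perm_vals; case_lia.
Qed.

Lemma cyc1_neq_conj_neg1_tperm : c1 != c1 ^ (neg1 * t).
Proof.
apply/eqP => /(congr1 (fun s : {perm _} => val (s (pt p)))).
by rewrite conjgE invMg tpermV neg1V; perm_vals; case_lia.
Qed.

(* c1 * c1 ^ (neg1 * t) is the 3-cycle (0 p p-1); c1 ^ k1 is a p-cycle avoiding it. *)
Local Notation k1 := (tperm (pt 0) (pt p.+1) * tperm (pt q) (pt p.+2)).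

Lemma commute_cyc1_conj : commute (c1 ^ k1) (c1 * c1 ^ (neg1 * t)).
Proof.
set S := [set pt 0; pt q; pt p].
apply: (@perm_onC _ (~: S) S); last by rewrite disjoints_subset.
  apply: perm_on_fix => i; rewrite setCK /S !inE -orbA => /or3P[]/eqP->;
    by apply: val_inj; rewrite conjgE !invMg !tpermV; perm_vals; case_lia.
apply: perm_on_fix => i; rewrite /S !inE => nSi; apply: val_inj; move: nSi.
by have := ltn_ord i; rewrite conjgE invMg tpermV neg1V -!val_eqE; perm_vals; case_lia.
Qed.

Section Irreducible.

Variable G : {group {perm 'I_(p.*2)}}.
Hypothesis nG : [set: {perm 'I_(p.*2)}] \subset 'N(G).

Lemma killing_irreducible_cyc1 :
  c1 \in G -> killing_irreducible G (c1 ^: [set: {perm 'I_(p.*2)}]).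
Proof.
move=> c1G; have inC k : c1 ^ k \in c1 ^: [set: _] by rewrite memJ_class ?inE.
have inG k : c1 ^ k \in G by rewrite memJ_norm ?(subsetP nG) ?inE.
have genS : <<[set c1; c2; neg1; neg1 * t]>> = [set: {perm 'I_(p.*2)}].
  apply/eqP; rewrite eqEsubset subsetT -gen_cyc12_tperm gen_subG.
  apply/subsetP => s; rewrite !inE -orbA => /or3P[]/eqP->;
    last rewrite -[X in X \in _](mulKg neg1 t) groupM ?groupV //;
    by apply: mem_gen; rewrite !inE eqxx ?orbT.
apply: (killing_irreducible_class_gen nG genS).
move=> s; rewrite !inE -!orbA => /or4P[]/eqP->.
- by rewrite conjg_fix_commute ?connect0.
- by rewrite conjg_fix_commute ?connect0 //; apply: commute_cyc12.
- apply: connect1; apply: (killing_rel_witness (w := c1));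
    rewrite ?class_refl ?inC ?cyc1_mul_conj_neg1 //.
  + exact: cyc1_neq_conj_neg1.
  + exact: commute1.
- apply: connect1; apply: (killing_rel_witness (w := c1 ^ k1));
    rewrite ?class_refl ?inC ?inG //.
  + exact: cyc1_neq_conj_neg1_tperm.
  + exact: commute_cyc1_conj.
Qed.

Lemma killing_irreducible_cyc12 :
  c1 * c2 \in G -> killing_irreducible G ((c1 * c2) ^: [set: {perm 'I_(p.*2)}]).
Proof.
move=> cG; have inC k : (c1 * c2) ^ k \in (c1 * c2) ^: [set: _].
  by rewrite memJ_class ?inE.
have inG k : (c1 * c2) ^ k \in G by rewrite memJ_norm ?(subsetP nG) ?inE.
apply: (killing_irreducible_class_gen nG gen_cyc12_tperm).
move=> s; rewrite !inE -!orbA => /or3P[]/eqP->.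
- rewrite conjg_fix_commute ?connect0 //.
  by apply/commute_sym/commuteM; [apply: commute_refl | apply: commute_cyc12].
- rewrite conjg_fix_commute ?connect0 //.
  by apply/commute_sym/commuteM; [apply/commute_sym/commute_cyc12 | apply: commute_refl].
- apply: connect1; apply: (killing_rel_witness (w := (c1 * c2) ^ interleave));
    rewrite ?class_refl ?inC ?inG //.
  + exact: cyc12_neq_conj_tperm.
  + by rewrite cyc12_mul_conj_tperm; apply: commute_refl.
Qed.

End Irreducible.

Lemma killing_irreducible_conj_cyc1 (G : {group {perm 'I_(p.*2)}}) k :
  G :=: 'Sym_('I_(p.*2)) \/ G :=: 'Alt_('I_(p.*2)) -> c1 ^ k \in G ->
  killing_irreducible G ((c1 ^ k) ^: G).
Proof.
move=> hG ckG; have nG := Sym_Alt_norm hG.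
apply: (killing_irreducible_Sym_Alt hG _ commute_cyc1_tperm).
  by rewrite odd_tperm -val_eqE /= !ptE; lia.
by apply: killing_irreducible_cyc1; rewrite // -(memJ_norm c1 (subsetP nG k (in_setT k))).
Qed.

Hypothesis p_odd : odd p.

Lemma killing_irreducible_conj_cyc12 (G : {group {perm 'I_(p.*2)}}) k :
  G :=: 'Sym_('I_(p.*2)) \/ G :=: 'Alt_('I_(p.*2)) -> (c1 * c2) ^ k \in G ->
  killing_irreducible G (((c1 * c2) ^ k) ^: G).
Proof.
move=> hG ckG; have nG := Sym_Alt_norm hG.
apply: (killing_irreducible_Sym_Alt hG _ commute_cyc12_swap_halves).
  by rewrite odd_swap_halves.
by apply: killing_irreducible_cyc12; rewrite // -(memJ_norm _ (subsetP nG k (in_setT k))).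
Qed.

End CanonicalForms.

Theorem proposition7p7 (p : nat) (G : {group {perm 'I_(p.*2)}})
    (x : {perm 'I_(p.*2)}) :
  prime p -> 5 <= p ->
  (G :=: Sym 'I_(p.*2) \/ G :=: Alt 'I_(p.*2)) ->
  x \in G -> p.-elt x -> x != 1 ->
  killing_irreducible G (x ^: G).
Proof.
case: p G x => [//|q] G x p_pr p_ge5 hG xG pelt ntx.
have xp : x ^+ q.+1 = 1 by apply: pelt_expg_prime; rewrite // card_ord; nia.
have p_gt2 : 2 < q.+1 by lia.
have p_odd : odd q.+1 by case: (even_prime p_pr) => [e|//]; rewrite e in p_ge5.
have [k [xk | xk]] := pelt_conj_cyc p_pr xp ntx; rewrite xk in xG *.
- exact (killing_irreducible_conj_cyc1 p_gt2 hG xG).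
- exact (killing_irreducible_conj_cyc12 p_gt2 p_odd hG xG).
Qed.
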